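(* Let $\mathbb{S}$ be a finite state space with $|\mathbb{S}|=K$ and let ${\bm Q}$ be the $K\times K$ transition rate matrix of a stationary and ergodic (irreducible) continuous-time Markov chain on $\mathbb{S}$. Regard ${\bm Q}$ as a function of its off-diagonal entries $q_{ij}\ge 0$ ($i\neq j$), the diagonal being determined by the requirement that each row sums to zero. Let ${\bm P}({\bm Q})={\bm I}+{\bm Q}/\gamma({\bm Q})$, where $\gamma$ is a positive function of the off-diagonal entries with $\gamma({\bm Q})>\max_{k}(-{\bm Q}_{kk})$, and fix $i\neq j$ such that ${\bm P}$ is differentiable with respect to $q_{ij}$ at ${\bm Q}$. Write ${\bm P}={\bm P}({\bm Q})$, let ${\bm\pi}$ be the unique stationary distribution of the chain (so ${\bm\pi}^{\mathsf T}{\bm Q}=0$), and let ${\bm\Pi}$ be the $K\times K$ matrix each of whose rows equals ${\bm\pi}^{\mathsf T}$. Then the limit $$\lim_{t\to\infty}\sum_{l=1}^{t}{\bm P}^{t-l}\,\frac{\partial {\bm P}({\bm Q})}{\partial q_{ij}}\,{\bm P}^{l-1}$$ exists and is unique, and it equals $${\bm\Pi}\sum_{l=0}^{\infty}\frac{\partial {\bm P}({\bm Q})}{\partial q_{ij}}\,{\bm P}^{l},$$ where the series converges.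
   Context: A transition rate matrix has nonnegative off-diagonal entries and rows summing to zero; for a stationary ergodic chain on a finite state space there is a unique stationary distribution ${\bm\pi}$. The matrix ${\bm P}={\bm I}+{\bm Q}/\gamma$ is the uniformized transition probability matrix of the chain; it has the same stationary distribution as ${\bm Q}$. In the paper's construction $\gamma({\bm Q})=\max_k(-{\bm Q}_{kk})+\epsilon$ for a fixed $\epsilon>0$. Matrix derivatives are entrywise. *)

From HB Require Import structures.
From mathcomp Require Import all_boot all_order all_algebra.
From mathcomp Require Import all_classical all_reals all_analysis.
Set Implicit Arguments. Unset Strict Implicit. Unset Printing Implicit Defensive.
Import Order.TTheory GRing.Theory Num.Theory.
Import numFieldNormedType.Exports.
Local Open Scope ring_scope.

Section Defs.
Variables (R : realType) (K : nat).

Definition ratemx (q : 'M[R]_K) : 'M[R]_K :=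
  \matrix_(a, b) if a == b then - (\sum_(c | c != a) q a c) else q a b.

Definition is_rate_matrix (Q : 'M[R]_K) : Prop :=
  (forall a b, a != b -> 0 <= Q a b) /\ (forall a, \sum_b Q a b = 0).

Definition irreducible (Q : 'M[R]_K) : Prop :=
  forall a b : 'I_K, connect [rel x y | (x != y) && (0 < Q x y)] a b.

Definition stationary_distribution (Q : 'M[R]_K) (pi : 'rV[R]_K) : Prop :=
  (forall a, 0 <= pi 0 a) /\ \sum_a pi 0 a = 1 /\ pi *m Q = 0.

Definition Pof (gamma : 'M[R]_K -> R) (q : 'M[R]_K) : 'M[R]_K :=
  1%:M + (gamma (ratemx q))^-1 *: ratemx q.

Definition Psec (gamma : 'M[R]_K -> R) (Q : 'M[R]_K) (i j a b : 'I_K) : R -> R :=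
  fun s => Pof gamma (Q + s *: delta_mx i j) a b.

Definition dP (gamma : 'M[R]_K -> R) (Q : 'M[R]_K) (i j : 'I_K) : 'M[R]_K :=
  \matrix_(a, b) derive1 (Psec gamma Q i j a b) 0.

Definition Pimx (pi : 'rV[R]_K) : 'M[R]_K := \matrix_(a, b) pi 0 b.

Definition Sseq (P D : 'M[R]_K) (t : nat) : 'M[R]_K :=
  \sum_(1 <= l < t.+1) (P ^+ (t - l) *m D *m P ^+ (l.-1)).

Definition Tseq (P D : 'M[R]_K) (n : nat) : 'M[R]_K :=
  \sum_(0 <= l < n) (D *m P ^+ l).

End Defs.

From HB Require Import structures.
From mathcomp Require Import all_boot all_order all_algebra.
From mathcomp Require Import all_classical all_reals all_analysis.
From mathcomp Require Import ring lra zify.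
Import Order.TTheory GRing.Theory Num.Theory.
Import numFieldNormedType.Exports.
Set Implicit Arguments. Unset Strict Implicit.
Local Open Scope classical_set_scope.
Local Open Scope ring_scope.

(* The uniformized matrix P is stochastic with a positive diagonal, so the
   irreducibility of Q makes P^K entrywise positive, and Doeblin's contraction
   of column oscillations gives |P^m - Pi| <= C r^m with r < 1.  Every
   P(Q + s e_ij) is stochastic, so the rows of D = dP/dq_ij sum to zero and
   D Pi = 0.  Hence D P^m = D (P^m - Pi) decays geometrically, the series
   sum_l D P^l converges, and
     S_t - Pi sum_(l<t) D P^l = sum_(m<t) (P^(t-1-m) - Pi) D (P^m - Pi)
   is O(t r^(t-1)), which tends to 0. *)

Section MatrixNorm.
Variable R : realDomainType.

Lemma mx_norm_entry m n (A : 'M[R]_(m, n)) i j : `|A i j| <= `|A|.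
Proof.
rewrite [leRHS]/Num.norm /= mx_normrE.
by apply/bigmax_geP; right; exists (i, j).
Qed.

Lemma mx_norm_le m n (A : 'M[R]_(m, n)) c :
  0 <= c -> (forall i j, `|A i j| <= c) -> `|A| <= c.
Proof.
move=> c0 HA; rewrite [leLHS]/Num.norm /= mx_normrE.
by apply/bigmax_leP; split => // -[i j] _; apply: HA.
Qed.

Lemma mx_normM m n p (A : 'M[R]_(m, n)) (B : 'M[R]_(n, p)) :
  `|A *m B| <= n%:R * (`|A| * `|B|).
Proof.
apply: mx_norm_le => [|i j]; first by rewrite !mulr_ge0.
rewrite mxE; apply: le_trans (ler_norm_sum _ _ _) _.
have -> : n%:R * (`|A| * `|B|) = \sum_(k < n) `|A| * `|B|.
  by rewrite sumr_const card_ord mulr_natl.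
apply: ler_sum => k _.
by rewrite normrM ler_pM ?mx_norm_entry.
Qed.

Lemma mx_normM_le m n p (A : 'M[R]_(m, n)) (B : 'M[R]_(n, p)) a b :
  `|A| <= a -> `|B| <= b -> `|A *m B| <= n%:R * (a * b).
Proof.
move=> Aa Bb; apply: le_trans (mx_normM A B) _.
by apply: ler_wpM2l => //; apply: ler_pM.
Qed.

End MatrixNorm.

Section StochasticMatrix.
Variables (R : realFieldType) (n : nat).
Implicit Types (M A : 'M[R]_n) (pi : 'rV[R]_n).

Definition stochastic M :=
  (forall a b, 0 <= M a b) /\ (forall a, \sum_b M a b = 1).

Lemma stochastic1 : stochastic 1.
Proof.
split=> [a b|a]; first by rewrite mxE ler0n.
rewrite (bigD1 a) //= big1 ?addr0 => [|b ba]; first by rewrite mxE eqxx.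
by rewrite mxE eq_sym (negbTE ba).
Qed.

Lemma stochasticM M A : stochastic M -> stochastic A -> stochastic (M *m A).
Proof.
move=> [M0 M1] [A0 A1]; split=> [a b|a].
  by rewrite mxE sumr_ge0 // => c _; rewrite mulr_ge0.
under eq_bigr do rewrite mxE.
rewrite exchange_big /= -(M1 a); apply: eq_bigr => c _.
by rewrite -mulr_sumr A1 mulr1.
Qed.

Lemma stochasticX M k : stochastic M -> stochastic (M ^+ k).
Proof.
move=> HM; elim: k => [|k IH]; first exact: stochastic1.
by rewrite exprS; apply: stochasticM.
Qed.

Lemma stochastic_le1 M a b : stochastic M -> M a b <= 1.
Proof.
move=> [M0 M1]; rewrite -(M1 a) (bigD1 b) //= lerDl.
by rewrite sumr_ge0.
Qed.

Lemma mulmxX_fixed pi M k : pi *m M = pi -> pi *m M ^+ k = pi.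
Proof.
move=> piM; elim: k => [|k IH]; first by rewrite expr0 mulmx1.
by rewrite exprSr -mulmxE mulmxA IH.
Qed.

End StochasticMatrix.

Section Doeblin.
Variables (R : realFieldType) (n : nat).
Implicit Types M A : 'M[R]_n.

Definition col_osc_le A c := forall a a' b, `|A a b - A a' b| <= c.

Lemma stochastic_col_osc_le1 M : stochastic M -> col_osc_le M 1.
Proof.
move=> HM a a' b; have [M0 _] := HM.
have := stochastic_le1 a b HM; have := stochastic_le1 a' b HM.
by have := M0 a b; have := M0 a' b; rewrite ler_norml; lra.
Qed.

(* Doeblin: once the floor d is removed, each row of M has mass 1 - n d. *)
Lemma col_osc_le_mulmx M A d c :
  stochastic M -> (forall a b, d <= M a b) ->
  col_osc_le A c -> col_osc_le (M *m A) ((1 - n%:R * d) * c).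
Proof.
move=> [_ M1] Md HA.
set s := 1 - n%:R * d.
have sE x : s = \sum_y (M x y - d).
  by rewrite /s sumrB M1 sumr_const card_ord mulr_natl.
suff key x x' b : (M *m A) x b - (M *m A) x' b <= s * c.
  by move=> a a' b; rewrite ler_norml key lerNl opprB key.
have s0 : 0 <= s by rewrite (sE x) sumr_ge0 // => y _; rewrite subr_ge0.
case: (arg_maxP (fun y => A y b) (isT : predT x)) => hi _ hiP.
case: (arg_minP (fun y => A y b) (isT : predT x)) => lo _ loP.
have shift y : (M *m A) y b = \sum_z (M y z - d) * A z b + d * \sum_z A z b.
  rewrite mxE mulr_sumr -big_split.
  by apply: eq_bigr => z _ /=; rewrite mulrBl subrK.
have up : \sum_z (M x z - d) * A z b <= s * A hi b.
  rewrite (sE x) mulr_suml; apply: ler_sum => z _.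
  by apply: ler_wpM2l; [rewrite subr_ge0 | exact: hiP].
have low : s * A lo b <= \sum_z (M x' z - d) * A z b.
  rewrite (sE x') mulr_suml; apply: ler_sum => z _.
  by apply: ler_wpM2l; [rewrite subr_ge0 | exact: loP].
have osc : A hi b - A lo b <= c by apply: le_trans (ler_norm _) (HA _ _ _).
rewrite !shift opprD addrACA subrr addr0.
apply: le_trans (lerB up low) _.
by rewrite -mulrBr; apply: ler_wpM2l.
Qed.

Lemma col_osc_le_exp M N d :
  stochastic M -> (forall a b, d <= (M ^+ N) a b) ->
  forall q k, col_osc_le (M ^+ (q * N + k)) ((1 - n%:R * d) ^+ q).
Proof.
move=> HM Md; elim=> [|q IH] k.
  by rewrite mul0n add0n expr0; apply/stochastic_col_osc_le1/stochasticX.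
rewrite mulSn -addnA exprD exprS.
exact: col_osc_le_mulmx (stochasticX N HM) Md (IH k).
Qed.

End Doeblin.

Lemma bernoulli_le (R : realDomainType) (x : R) k :
  0 <= x <= 1 -> 1 - k%:R * x <= (1 - x) ^+ k.
Proof.
move=> /andP[x0 x1]; elim: k => [|k IH]; first by rewrite mul0r subr0 expr0.
have h : 0 <= 1 - x by rewrite subr_ge0.
have := ler_wpM2r h IH; rewrite -exprSr -natr1.
have : 0 <= k%:R * x * x by rewrite !mulr_ge0.
by move=> *; nra.
Qed.

Lemma exists_exp_ge (R : realFieldType) (rho : R) N :
  0 <= rho < 1 -> exists2 r : R, 0 < r < 1 & rho <= r ^+ N.
Proof.
move=> /andP[rho0 rho1].
have N2 : 0 < N.+2%:R :> R by rewrite ltr0n.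
set x := (1 - rho) / N.+2%:R.
have x0 : 0 < x by rewrite divr_gt0 // subr_gt0.
have x1 : x <= 1 / 2.
  rewrite /x ler_pdivrMr //.
  have h2 : 2 <= N.+2%:R :> R by rewrite ler_nat.
  lra.
have Nx : N%:R * x <= 1 - rho.
  rewrite /x mulrA ler_pdivrMr // mulrC ler_wpM2l ?subr_ge0 ?ltW //.
  by rewrite ltr_nat.
exists (1 - x); first by apply/andP; split; lra.
apply: le_trans (bernoulli_le N _); first lra.
by apply/andP; split; lra.
Qed.

Section Mixing.
Variables (R : realType) (n : nat).
Implicit Types (M A : 'M[R]_n) (pi : 'rV[R]_n).

Lemma stationary_dev_le A pi c :
  (forall a, 0 <= pi 0 a) -> \sum_a pi 0 a = 1 -> pi *m A = pi ->
  col_osc_le A c -> forall a b, `|(A - Pimx pi) a b| <= c.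
Proof.
move=> pi0 pi1 piA HA a b; rewrite !mxE.
have -> : pi 0 b = \sum_x pi 0 x * A x b by rewrite -{1}piA mxE.
have -> : A a b = \sum_x pi 0 x * A a b by rewrite -mulr_suml pi1 mul1r.
rewrite -sumrB; apply: le_trans (ler_norm_sum _ _ _) _.
rewrite -[c]mul1r -pi1 mulr_suml; apply: ler_sum => x _.
by rewrite -mulrBr normrM ger0_norm // ler_wpM2l.
Qed.

Lemma stochastic_exp_mixing M pi N :
  (0 < n)%N -> (0 < N)%N -> stochastic M -> (forall a b, 0 < (M ^+ N) a b) ->
  (forall a, 0 <= pi 0 a) -> \sum_a pi 0 a = 1 -> pi *m M = pi ->
  exists C r : R, 0 <= r < 1 /\ forall m, `|M ^+ m - Pimx pi| <= C * r ^+ m.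
Proof.
move=> n0 N0 HM MN0 pi0 pi1 piM.
pose a0 := Ordinal n0.
pose p0 := [arg min_(p < (a0, a0)) (M ^+ N) p.1 p.2]%O.
pose d := (M ^+ N) p0.1 p0.2.
have Md a b : d <= (M ^+ N) a b.
  by rewrite /d /p0; case: arg_minP => // p _ /(_ (a, b)); apply.
set rho := 1 - n%:R * d.
have rho0 : 0 <= rho.
  have [_ MN1] := stochasticX N HM.
  rewrite /rho subr_ge0 -[leRHS](MN1 a0).
  have -> : n%:R * d = \sum_(b < n) d by rewrite sumr_const card_ord mulr_natl.
  by apply: ler_sum => b _; apply: Md.
have rho1 : rho < 1 by rewrite ltrBlDr ltrDl mulr_gt0 ?ltr0n ?MN0.
have [r /andP[r0 r1] rhor] := exists_exp_ge N (introT andP (conj rho0 rho1)).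
exists (r ^+ N)^-1, r; split=> [|m]; first by rewrite ltW.
have rN0 : 0 < r ^+ N by rewrite exprn_gt0.
rewrite (divn_eq m N); set q := (m %/ N)%N; set k := (m %% N)%N.
apply: le_trans (_ : rho ^+ q <= _).
  apply: mx_norm_le; first by rewrite exprn_ge0.
  apply: stationary_dev_le => //; first exact: mulmxX_fixed.
  exact: col_osc_le_exp.
apply: le_trans (_ : (r ^+ N) ^+ q <= _).
  by rewrite lerXn2r // nnegrE ?exprn_ge0 // ltW.
rewrite -exprM mulnC exprD mulrCA -[leLHS]mulr1.
apply: ler_wpM2l; first by rewrite exprn_ge0 ?ltW.
by rewrite ler_pdivlMl // mulr1 ler_wiXn2l ?ltW // ltnW // ltn_mod.
Qed.

End Mixing.

Section Primitive.
Variables (R : realFieldType) (n : nat).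
Implicit Types M A B : 'M[R]_n.

Lemma mulmx_entry_gt0 A B a c b :
  (forall i j, 0 <= A i j) -> (forall i j, 0 <= B i j) ->
  0 < A a c -> 0 < B c b -> 0 < (A *m B) a b.
Proof.
move=> A0 B0 Aac Bcb; rewrite mxE (bigD1 c) //=.
by rewrite ltr_pwDl ?mulr_gt0 ?sumr_ge0 // => x _; rewrite mulr_ge0.
Qed.

Lemma stochastic_exp_gt0_path M (e : rel 'I_n) a p :
  stochastic M -> (forall x y, e x y -> 0 < M x y) ->
  path e a p -> 0 < (M ^+ size p) a (last a p).
Proof.
move=> HM Me; elim: p a => [|y p IH] a /=; first by rewrite expr0 mxE eqxx.
case/andP=> eay Hp; rewrite exprS.
apply: mulmx_entry_gt0 (Me _ _ eay) (IH _ Hp); first by case: HM.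
by case: (stochasticX (size p) HM).
Qed.

Lemma stochastic_exp_gt0_mono M a b k l :
  stochastic M -> (forall x, 0 < M x x) -> (k <= l)%N ->
  0 < (M ^+ k) a b -> 0 < (M ^+ l) a b.
Proof.
move=> HM Mdiag /subnK <-; elim: (l - k)%N => [//|j IH] Mk.
rewrite addSn exprS; apply: mulmx_entry_gt0 (Mdiag a) (IH Mk).
  by case: HM.
by case: (stochasticX (j + k) HM).
Qed.

Lemma stochastic_primitive M (e : rel 'I_n) :
  stochastic M -> (forall x, 0 < M x x) -> (forall x y, e x y -> 0 < M x y) ->
  (forall a b, connect e a b) -> forall a b, 0 < (M ^+ n) a b.
Proof.
move=> HM Mdiag Me conn a b.
have /connectP[p /shortenP[p' ep' uniq_p' _] ->] := conn a b.
apply: stochastic_exp_gt0_mono (stochastic_exp_gt0_path HM Me ep') => //.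
have := max_card (mem (a :: p')).
by rewrite (card_uniqP uniq_p') card_ord; apply: ltnW.
Qed.

End Primitive.

(* The library gives real matrices a complete uniform structure and a norm
   but does not join them into the complete normed module [normed_cvg] needs. *)
HB.instance Definition _ (R : realType) (m n : nat) :=
  Uniform_isComplete.Build 'M[R]_(m, n) (@mx_complete R m n).

Section Limits.
Variable R : realType.

Lemma cvg_mulmxl m n p (A : 'M[R]_(m, n)) (B : nat -> 'M[R]_(n, p)) L :
  B @ \oo --> L -> (fun t => A *m B t) @ \oo --> A *m L.
Proof.
move=> BL; apply: cvg_zero; apply/norm_cvg0P.
have BL0 : (fun t => `|B t - L|) @ \oo --> 0.
  by apply/norm_cvg0P; rewrite -(subrr L); apply: cvgB => //; apply: cvg_cst.
have bound0 : (fun t => n%:R * (`|A| * `|B t - L|)) @ \oo --> 0.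
  by rewrite -(mulr0 n%:R) -(mulr0 `|A|); do 2 apply: cvgMr.
apply: (squeeze_cvgr _ (cvg_cst 0) bound0).
by near=> t; rewrite normr_ge0 /= !fctE -mulmxBr mx_normM.
Unshelve. all: by end_near.
Qed.

Lemma natr_mul_exp_le (w : R) t :
  0 <= w <= 1 -> t%:R * w ^+ t.-1 * (1 - w) <= 1.
Proof.
move=> /andP[w0 w1].
have : 1 - w ^+ t <= 1 by rewrite lerBlDr lerDl exprn_ge0.
apply: le_trans; rewrite -[1 - w ^+ t]opprB subrX1 -mulNr opprB.
rewrite mulrC; apply: ler_wpM2l; first by rewrite subr_ge0.
have -> : t%:R * w ^+ t.-1 = \sum_(i < t) w ^+ t.-1.
  by rewrite sumr_const card_ord mulr_natl.
apply: ler_sum => i _; rewrite ler_wiXn2l //.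
by rewrite -ltnS (ltn_predK (ltn_ord i)).
Qed.

Lemma cvg_natr_mul_exp (r : R) :
  0 <= r < 1 -> (fun t => t%:R * r ^+ t.-1) @ \oo --> 0.
Proof.
(* With w = sqrt r, t w^(t-1) stays bounded and r^(t-1) = w^(t-1) w^(t-1). *)
move=> /andP[r0 r1]; set w := Num.sqrt r.
have w0 : 0 <= w := sqrtr_ge0 r.
have w1 : w < 1 by rewrite -sqrtr1 ltr_sqrt.
have bound t : t%:R * r ^+ t.-1 <= (1 - w)^-1 * w ^+ t.-1.
  rewrite -(sqr_sqrtr r0) -/w exprAC expr2 mulrA.
  apply: ler_wpM2r; first exact: exprn_ge0.
  rewrite -[leRHS]mul1r ler_pdivlMr ?subr_gt0 //.
  by rewrite natr_mul_exp_le // w0 ltW.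
have geo : (fun t => (1 - w)^-1 * w ^+ t.-1) @ \oo --> 0.
  by rewrite -cvg_shiftS /=; apply: cvg_geometric; rewrite ger0_norm.
apply: (squeeze_cvgr _ (cvg_cst 0) geo).
by near=> t; rewrite bound mulr_ge0 ?exprn_ge0.
Unshelve. all: by end_near.
Qed.

Lemma Sseq_sub_Tseq n (P D Pi : 'M[R]_n) t : D *m Pi = 0 ->
  Sseq P D t - Pi *m Tseq P D t =
  \sum_(0 <= m < t) (P ^+ (t - m.+1) - Pi) *m D *m (P ^+ m - Pi).
Proof.
move=> DPi; rewrite /Sseq /Tseq big_add1 /= mulmx_sumr -sumrB.
apply: eq_bigr => m _.
by rewrite mulmxBr -(mulmxA _ D Pi) DPi mulmx0 subr0 !mulmxBl !mulmxA.
Qed.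

Section GeometricMixing.
Variables (n : nat) (P D Pi : 'M[R]_n) (C r : R).
Hypotheses (r01 : 0 <= r < 1) (DPi : D *m Pi = 0)
  (mixing : forall m, `|P ^+ m - Pi| <= C * r ^+ m).

Let C_ge0 : 0 <= C.
Proof. by have := mixing 0; rewrite expr0 mulr1; apply: le_trans. Qed.

Lemma Tseq_cvg : cvgn (Tseq P D).
Proof.
have [r0 r1] := andP r01.
have DPm m : `|D *m P ^+ m| <= geometric (n%:R * (`|D| * C)) r m.
  have -> : D *m P ^+ m = D *m (P ^+ m - Pi) by rewrite mulmxBr DPi subr0.
  by rewrite /geometric /= -!mulrA; apply: mx_normM_le.
have -> : Tseq P D = series (fun m => D *m P ^+ m) by [].
apply: normed_cvg; apply: series_le_cvg DPm _.
- by move=> m; apply: normr_ge0.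
- by move=> m; rewrite /geometric /= !mulr_ge0 ?exprn_ge0.
- by apply: is_cvg_geometric_series; rewrite ger0_norm.
Qed.

Lemma Sseq_sub_Tseq_cvg0 :
  (fun t => Sseq P D t - Pi *m Tseq P D t) @ \oo --> (0 : 'M[R]_n).
Proof.
set c := n%:R * (n%:R * (C * `|D|) * C).
have term t m : (m < t)%N ->
    `|(P ^+ (t - m.+1) - Pi) *m D *m (P ^+ m - Pi)| <= c * r ^+ t.-1.
  move=> mt; have -> : t.-1 = (t - m.+1 + m)%N by lia.
  have -> : c * r ^+ (t - m.+1 + m) =
      n%:R * (n%:R * (C * r ^+ (t - m.+1) * `|D|) * (C * r ^+ m)).
    by rewrite /c exprD; ring.
  by apply: mx_normM_le (mixing _); apply: mx_normM_le.
have gap t : `|Sseq P D t - Pi *m Tseq P D t| <= c * (t%:R * r ^+ t.-1).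
  have -> : c * (t%:R * r ^+ t.-1) = \sum_(0 <= m < t) c * r ^+ t.-1.
    by rewrite sumr_const_nat subn0 mulrCA mulr_natl.
  rewrite Sseq_sub_Tseq //.
  apply: le_trans (ler_norm_sum _ _ _) _.
  by apply: ler_sum_nat => m /andP[_ mt]; apply: term.
have bound0 : (fun t => c * (t%:R * r ^+ t.-1)) @ \oo --> 0.
  by rewrite -(mulr0 c); apply: cvgMr; apply: cvg_natr_mul_exp.
apply/norm_cvg0P; apply: (squeeze_cvgr _ (cvg_cst 0) bound0).
by near=> t; rewrite normr_ge0 gap.
Unshelve. all: by end_near.
Qed.

Lemma Sseq_cvg : Sseq P D @ \oo --> Pi *m limn (Tseq P D).
Proof.
have -> : Sseq P D =
    (fun t => (Sseq P D t - Pi *m Tseq P D t) + Pi *m Tseq P D t).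
  by apply/funext => t; rewrite subrK.
rewrite -[X in _ --> X]add0r; apply: cvgD; first exact: Sseq_sub_Tseq_cvg0.
exact/cvg_mulmxl/Tseq_cvg.
Qed.

End GeometricMixing.

End Limits.

Section Uniformization.
Variables (R : realType) (n : nat).
Implicit Types (q Q : 'M[R]_n) (g : 'M[R]_n -> R).

Lemma ratemx_rowsum q a : \sum_b ratemx q a b = 0.
Proof.
rewrite (bigD1 a) //= mxE eqxx (eq_bigr (q a)) ?addNr // => b ba.
by rewrite mxE eq_sym (negbTE ba).
Qed.

Lemma ratemx_id Q : is_rate_matrix Q -> ratemx Q = Q.
Proof.
move=> [_ Q0]; apply/matrixP => a b; rewrite mxE.
case: eqP => [<-|//]; have := Q0 a.
by rewrite (bigD1 a) //= => /eqP; rewrite addr_eq0 => /eqP.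
Qed.

Lemma Pof_rowsum g q a : \sum_b Pof g q a b = 1.
Proof.
under eq_bigr do rewrite mxE [X in _ + X]mxE [X in X + _]mxE.
rewrite big_split /= -mulr_sumr ratemx_rowsum mulr0 addr0.
rewrite (bigD1 a) //= eqxx big1 ?addr0 // => b ba.
by rewrite eq_sym (negbTE ba).
Qed.

Lemma dP_rowsum g Q i j a :
  (forall a b, derivable (Psec g Q i j a b) 0 1) -> \sum_b dP g Q i j a b = 0.
Proof.
move=> Pder; under eq_bigr do rewrite mxE derive1E.
rewrite -derive_sum; last by move=> b; apply: Pder.
have -> : \sum_(b < n) Psec g Q i j a b = cst 1.
  by apply/funext => s; rewrite fct_sumE /Psec Pof_rowsum.
by rewrite derive_cst.
Qed.

Lemma mulmx_Pimx_rowsum0 (D : 'M[R]_n) (pi : 'rV[R]_n) :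
  (forall a, \sum_b D a b = 0) -> D *m Pimx pi = 0.
Proof.
move=> D0; apply/matrixP => a b; rewrite !mxE.
under eq_bigr do rewrite mxE.
by rewrite -mulr_suml D0 mul0r.
Qed.

Section UniformizedChain.
Variables (Q : 'M[R]_n) (g : 'M[R]_n -> R).
Hypotheses (HQ : is_rate_matrix Q) (g_gt0 : 0 < g Q)
  (g_gt_diag : forall k, - Q k k < g Q).

Lemma PofE a b : Pof g Q a b = (a == b)%:R + (g Q)^-1 * Q a b.
Proof. by rewrite /Pof ratemx_id // !mxE. Qed.

Lemma Pof_diag_gt0 a : 0 < Pof g Q a a.
Proof.
have : - Q a a / g Q < 1 by rewrite ltr_pdivrMr // mul1r.
by rewrite PofE eqxx mulNr mulrC /=; lra.
Qed.

Lemma Pof_gt0 a b : a != b -> 0 < Q a b -> 0 < Pof g Q a b.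
Proof. by move=> ab Qab; rewrite PofE (negbTE ab) add0r mulr_gt0 ?invr_gt0. Qed.

Lemma Pof_stochastic : stochastic (Pof g Q).
Proof.
split=> [a b|a]; last exact: Pof_rowsum.
case: (eqVneq a b) => [<-|ab]; first exact/ltW/Pof_diag_gt0.
by rewrite PofE (negbTE ab) add0r mulr_ge0 ?(proj1 HQ) // invr_ge0 ltW.
Qed.

Lemma Pof_stationary (pi : 'rV[R]_n) : pi *m Q = 0 -> pi *m Pof g Q = pi.
Proof.
move=> piQ; rewrite /Pof ratemx_id // mulmxDr mulmx1 -scalemxAr piQ.
by rewrite scaler0 addr0.
Qed.

End UniformizedChain.
End Uniformization.

Theorem proposition1 (R : realType) (K : nat) (Q : 'M[R]_K)
  (gamma : 'M[R]_K -> R) (pi : 'rV[R]_K) (i j : 'I_K) :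
  is_rate_matrix Q -> irreducible Q ->
  (forall Q' : 'M[R]_K, is_rate_matrix Q' ->
     0 < gamma Q' /\ (forall k, - Q' k k < gamma Q')) ->
  i != j ->
  (forall a b, derivable (Psec gamma Q i j a b) 0 1) ->
  stationary_distribution Q pi ->
  let P := Pof gamma Q in
  let D := dP gamma Q i j in
  cvgn (Sseq P D) /\ cvgn (Tseq P D) /\
  limn (Sseq P D) = Pimx pi *m limn (Tseq P D).
Proof.
move=> HQ Qirr Hgamma _ Pder [pi0 [pi1 piQ]] P D.
have [g_gt0 g_gt_diag] := Hgamma Q HQ.
have K_gt0 : (0 < K)%N by apply: leq_ltn_trans (ltn_ord i).
have HP : stochastic P := Pof_stochastic HQ g_gt0 g_gt_diag.
have P_primitive : forall a b, 0 < (P ^+ K) a b.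
  apply: stochastic_primitive Qirr => // [a|a b /andP[ab Qab]].
    exact: Pof_diag_gt0.
  exact: Pof_gt0.
have [C [r [r01 mixing]]] := stochastic_exp_mixing K_gt0 K_gt0 HP P_primitive
  pi0 pi1 (Pof_stationary gamma HQ piQ).
have DPi : D *m Pimx pi = 0 by apply/mulmx_Pimx_rowsum0 => a; apply: dP_rowsum.
have S_cvg := Sseq_cvg r01 DPi mixing.
split; first exact: cvgP S_cvg.
by split; [exact: Tseq_cvg r01 DPi mixing | exact: cvg_lim S_cvg].
Qed.
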